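(* Let $k\ge2$. Then $\mathcal J_k\widehat{\mathcal L}_{k-1}=\widehat{\mathcal L}_k\mathcal J_k$ as operators $\mathbb R^{V^{k-1}}\to\mathbb R^{V^k}$.
   Context: $V$ is a finite set with symmetric non-negative weights $c_{xy}=c_{yx}\ge0$, $\alpha=(\alpha_x)$ positive. For $m\ge1$, the lookdown generator acts on $\varphi:V^m\to\mathbb R$ by $$\widehat{\mathcal L}_m\varphi(\mathbf x)=\sum_{x,y\in V}c_{xy}\sum_{i=1}^m\delta_{x,x_i}\Big(\alpha_y+2\sum_{j=1}^{i-1}\delta_{y,x_j}\Big)(\varphi(\mathbf x_i^y)-\varphi(\mathbf x)),$$ where $\mathbf x_i^y$ is $\mathbf x$ with its $i$-th coordinate replaced by $y$. $\mathcal J_k\varphi(x_1,\dots,x_k)=\varphi(x_1,\dots,x_{k-1})$. *)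

From HB Require Import structures.
From mathcomp Require Import all_boot all_order all_algebra.
From mathcomp Require Import reals.
Set Implicit Arguments. Unset Strict Implicit. Unset Printing Implicit Defensive.
Import Order.TTheory GRing.Theory Num.Theory.
Local Open Scope ring_scope.

(* Points of V^m are functions 'I_m -> V; coordinates are 0-indexed,
   so paper's coordinate i (1..m) is our i-1. *)

Definition upd (V : eqType) (m : nat) (xs : 'I_m -> V) (i : 'I_m) (y : V)
  : 'I_m -> V := fun j => if j == i then y else xs j.

Definition lookdown (R : realType) (V : finType) (c : V -> V -> R)
  (alpha : V -> R) (m : nat) (phi : ('I_m -> V) -> R) : ('I_m -> V) -> R :=
  fun xs =>
    \sum_(x : V) \sum_(y : V) c x y *
      \sum_(i < m) ((x == xs i)%:R *
         (alpha y + 2 * \sum_(j < m | (j < i)%N) (y == xs j)%:R) *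
         (phi (upd xs i y) - phi xs)).

Definition Jop (R : Type) (V : Type) (k : nat) (phi : ('I_k.-1 -> V) -> R)
  : ('I_k -> V) -> R :=
  fun xs => phi (fun j : 'I_k.-1 => xs (widen_ord (leq_pred k) j)).

(* The lookdown dynamics is triangular: the rate at which level i jumps only
   depends on the types at levels below i, and a jump of level i changes only
   coordinate i. Hence, seen through J_k, i.e. forgetting the top level k,
   the k-level generator moves the first k-1 levels exactly as the
   (k-1)-level generator does, while jumps of level k are invisible. *)

From HB Require Import structures.
From mathcomp Require Import all_boot all_order all_algebra.
From mathcomp Require Import reals.
From mathcomp Require Import boolp.
Set Implicit Arguments. Unset Strict Implicit. Unset Printing Implicit Defensive.
Import Order.TTheory GRing.Theory Num.Theory.
Local Open Scope ring_scope.

Lemma big_ord_lt_widen (M : nmodType) (m i : nat) (le_m : (m <= m.+1)%N)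
    (F : 'I_m.+1 -> M) : (i <= m)%N ->
  \sum_(j < m.+1 | (j < i)%N) F j = \sum_(j < m | (j < i)%N) F (widen_ord le_m j).
Proof.
move=> le_im; rewrite big_mkcond [RHS]big_mkcond big_ord_recr /=.
rewrite ltnNge le_im addr0; apply: eq_bigr => j _.
by congr (if _ then F _ else 0); apply: val_inj.
Qed.

Section DropLast.

Variables (V : eqType) (m : nat).

Definition drop_last (xs : 'I_m.+1 -> V) : 'I_m -> V :=
  fun j => xs (widen_ord (leq_pred m.+1) j).

Lemma JopE (R : Type) (phi : ('I_m -> V) -> R) (xs : 'I_m.+1 -> V) :
  @Jop R V m.+1 phi xs = phi (drop_last xs).
Proof. by []. Qed.

Lemma drop_lastE (le_m : (m <= m.+1)%N) (xs : 'I_m.+1 -> V) (j : 'I_m) :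
  drop_last xs j = xs (widen_ord le_m j).
Proof. by congr xs; apply: val_inj. Qed.

Lemma drop_last_upd_max (xs : 'I_m.+1 -> V) (y : V) :
  drop_last (upd xs ord_max y) = drop_last xs.
Proof.
apply: funext => j; rewrite /drop_last /upd.
by rewrite -val_eqE /= ltn_eqF.
Qed.

Lemma drop_last_upd_widen (le_m : (m <= m.+1)%N) (xs : 'I_m.+1 -> V)
    (i : 'I_m) (y : V) :
  drop_last (upd xs (widen_ord le_m i) y) = upd (drop_last xs) i y.
Proof.
apply: funext => j; rewrite /drop_last /upd.
by rewrite -val_eqE val_eqE.
Qed.

End DropLast.

Lemma Jop_lookdown (R : realType) (V : finType) (c : V -> V -> R)
    (alpha : V -> R) (m : nat) (phi : ('I_m -> V) -> R) (xs : 'I_m.+1 -> V) :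
  @Jop R V m.+1 (lookdown c alpha phi) xs = lookdown c alpha (@Jop R V m.+1 phi) xs.
Proof.
rewrite JopE /lookdown; apply: eq_bigr => x _; apply: eq_bigr => y _.
congr (_ * _); rewrite [RHS]big_ord_recr /= !JopE drop_last_upd_max.
rewrite subrr mulr0 addr0; apply: eq_bigr => i _.
rewrite JopE drop_last_upd_widen -(drop_lastE (leqnSn m)).
by rewrite (big_ord_lt_widen (leq_pred m.+1)) // ltnW.
Qed.

Theorem lemmaA3 (R : realType) (V : finType) (c : V -> V -> R) (alpha : V -> R)
  (c_sym : forall x y, c x y = c y x)
  (c_ge0 : forall x y, 0 <= c x y)
  (alpha_gt0 : forall x, 0 < alpha x)
  (k : nat) (hk : (2 <= k)%N)
  (phi : ('I_k.-1 -> V) -> R) (xs : 'I_k -> V) :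
  Jop (lookdown c alpha phi) xs = lookdown c alpha (Jop phi) xs.
Proof.
case: k hk phi xs => [|m] // _ phi xs.
exact: Jop_lookdown.
Qed.
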